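(* For $p=1$ and any $N\ge 1$ and $d\in\mathbb{R}$, the characteristic polynomial of $\mathbf{M}^{-1}\mathbf{K}$ is $$\det\bigl(\lambda I-\mathbf{M}^{-1}\mathbf{K}\bigr)=\bigl(\lambda^2+4\lambda+6\bigr)^{N-1}\bigl(\lambda^2-6\lambda d+4\lambda+6\bigr).$$
   Context: Setting: the linear advection equation $\partial_t u+\partial_x u=s(x)$ (velocity $1$) with a Dirichlet condition $u=u_D$ at the left physical boundary $\bar x$. Uniform mesh of cells $\Omega_e=[x_{e-1/2},x_{e+1/2}]$, $e=1,\dots,N$, with $x_{1/2}=0$ and cell size $\Delta x=1$. On each cell the approximation space is $\mathbb{P}^p(\Omega_e)$ with basis $\{\phi^e_j\}_{j=0}^p$, where $\phi^e_j(x)=\phi_j(x-(e-1))$ are translates of a fixed basis $\{\phi_j\}$ of $\mathbb{P}^p$ on $[0,1]$. Local matrices (indices $i,j=0,\dots,p$, identical for all cells by translation): mass $M_{ij}=\int_{\Omega_e}\phi^e_i\phi^e_j\,dx$; stiffness $K^s_{ij}=\int_{\Omega_e}\partial_x\phi^e_i\,\phi^e_j\,dx$; right interface $K^R_{ij}=\phi^e_i(x_{e+1/2})\phi^e_j(x_{e+1/2})$; left interface coupling $(K^L)_{ij}=\phi^e_i(x_{e-1/2})\phi^{e-1}_j(x_{e-1/2})$. The physical boundary is at $\bar x = x_{1/2}+d$, with $d\in[-1,1]$ ($d<0$: outside the first cell, $d>0$: inside). Shifted boundary polynomial correction with homogeneous data $u_D=0$: the upwind flux at $x_{1/2}$ is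 $u^\star=-\bigl(u_h(x_{1/2}+d)-u_h(x_{1/2})\bigr)$, with $u_h$ the (polynomially extended) solution of cell 1, giving the matrix $K^{SB}_{ij}=-\phi^1_i(x_{1/2})\bigl(\phi^1_j(x_{1/2}+d)-\phi^1_j(x_{1/2})\bigr)$. The semi-discrete system is $\mathbf{M}\,\frac{d\mathbf{U}}{dt}=\mathbf{K}\mathbf{U}$ with $\mathbf{U}=(\mathbf{u}_1,\dots,\mathbf{u}_N)$ the modal coefficient vectors, $\mathbf{M}=\mathrm{diag}(M,\dots,M)$, and $\mathbf{K}$ block lower bidiagonal with diagonal blocks $K^s-K^R+K^{SB}$ (cell 1) and $K^s-K^R$ (cells $2,\dots,N$), subdiagonal blocks $K^L$, all other blocks zero. *)

From mathcomp Require Import all_boot all_order all_algebra.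
Set Implicit Arguments. Unset Strict Implicit. Unset Printing Implicit Defensive.
Import Order.TTheory GRing.Theory Num.Theory.
Local Open Scope ring_scope.

Definition pint01 (R : fieldType) (q : {poly R}) : R :=
  \sum_(i < size q) q`_i / (i.+1)%:R.

(* phi : 'I_(p+1) -> {poly R} is a basis of P^p, viewed on the reference cell
   [0,1]; cell e (1-based) is [e-1,e] and phi^e_j(x) = phi_j(x-(e-1)).
   With Delta x = 1, x_{e-1/2} corresponds to 0 and x_{e+1/2} to 1 in the
   reference variable. *)
Definition is_basisP (R : fieldType) (p : nat) (phi : 'I_p.+1 -> {poly R}) :=
  (forall i, (size (phi i) <= p.+1)%N) /\
  (forall c : 'I_p.+1 -> R, \sum_i c i *: phi i = 0 -> forall i, c i = 0).

Section Local.
Variables (R : fieldType) (p : nat) (phi : 'I_p.+1 -> {poly R}) (d : R).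

Definition massM : 'M[R]_p.+1 := \matrix_(i, j) pint01 (phi i * phi j).
Definition stiffKs : 'M[R]_p.+1 := \matrix_(i, j) pint01 ((phi i)^`() * phi j).
Definition KR : 'M[R]_p.+1 := \matrix_(i, j) ((phi i).[1] * (phi j).[1]).
(* phi^e_i(x_{e-1/2}) phi^{e-1}_j(x_{e-1/2}) *)
Definition KL : 'M[R]_p.+1 := \matrix_(i, j) ((phi i).[0] * (phi j).[1]).
(* -phi^1_i(x_{1/2}) (phi^1_j(x_{1/2}+d) - phi^1_j(x_{1/2})) *)
Definition KSB : 'M[R]_p.+1 :=
  \matrix_(i, j) (- ((phi i).[0] * ((phi j).[d] - (phi j).[0]))).

(* Global matrices on N cells; global index g <-> (cell g %/ (p+1), local g %% (p+1)),
   cells numbered from 0 here (cell 0 is the paper's cell 1). *)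
Definition cellof (N : nat) (g : 'I_(N * p.+1)) : nat := g %/ p.+1.
Definition locof (N : nat) (g : 'I_(N * p.+1)) : 'I_p.+1 := inord (g %% p.+1).

Definition globM (N : nat) : 'M[R]_(N * p.+1) :=
  \matrix_(g, h) (if cellof g == cellof h then massM (locof g) (locof h) else 0).

Definition globK (N : nat) : 'M[R]_(N * p.+1) :=
  \matrix_(g, h)
    (if cellof g == cellof h then
       (stiffKs - KR + (if cellof g == 0%N then KSB else 0)) (locof g) (locof h)
     else if cellof g == (cellof h).+1 then KL (locof g) (locof h)
     else 0).
End Local.

From mathcomp Require Import all_boot all_order all_algebra.
From mathcomp Require Import ring.
Set Implicit Arguments. Unset Strict Implicit. Unset Printing Implicit Defensive.
Import GRing.Theory Num.Theory.
Local Open Scope ring_scope.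

(** Numbering the unknowns cell by cell, M is block diagonal and K is block
    lower bidiagonal with (p+1)x(p+1) blocks, so M^-1 K is block lower
    bidiagonal too, and its characteristic polynomial is the product of those of
    its diagonal blocks M^-1 (K^s - K^R + K^SB) (first cell) and M^-1 (K^s - K^R)
    (the N - 1 others); the latter is the case d = 0 of the former since K^SB
    vanishes for d = 0.  For p = 1, writing phi_i = a_i + b_i x, the determinants
    of M and K and the trace of adj(M) K are D^2/12, D^2/2 and (d/2 - 1/3) D^2,
    where D = a_0 b_1 - a_1 b_0 is nonzero because phi is a basis; hence the
    2x2 block M^-1 K has trace 6d - 4 and determinant 6. *)

Section BlockBidiagonal.
Variables (R : comNzRingType) (p : nat).
Local Notation blk := 'M[R]_p.+1.

Definition bidiag_mx n (B0 B L : blk) : 'M[R]_(n * p.+1) :=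
  \matrix_(g, h)
    (if cellof g == cellof h then
       (if cellof g == 0%N then B0 else B) (locof g) (locof h)
     else if cellof g == (cellof h).+1 then L (locof g) (locof h)
     else 0).

Definition first_block_col n (L : blk) : 'M[R]_(n * p.+1, p.+1) :=
  \matrix_(g, j) (if cellof g == 0%N then L (locof g) j else 0).

Lemma cellof_lshift n (i : 'I_p.+1) :
  cellof (lshift (n * p.+1) i : 'I_(n.+1 * p.+1)) = 0%N.
Proof. exact: divn_small (ltn_ord i). Qed.

Lemma locof_lshift n (i : 'I_p.+1) :
  locof (lshift (n * p.+1) i : 'I_(n.+1 * p.+1)) = i.
Proof. by rewrite /locof /= modn_small ?inord_val. Qed.

Lemma cellof_rshift n (i : 'I_(n * p.+1)) :
  cellof (rshift p.+1 i : 'I_(n.+1 * p.+1)) = (cellof i).+1.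
Proof. by rewrite /cellof /= divnDl // divnn add1n. Qed.

Lemma locof_rshift n (i : 'I_(n * p.+1)) :
  locof (rshift p.+1 i : 'I_(n.+1 * p.+1)) = locof i.
Proof. by rewrite /locof /= modnDl. Qed.

Lemma bidiag_mxS n B0 B L :
  bidiag_mx n.+1 B0 B L =
  block_mx B0 0 (first_block_col n L) (bidiag_mx n B B L) :> 'M_(p.+1 + n * p.+1).
Proof.
apply/matrixP => i j; rewrite -[i]splitK -[j]splitK.
case: (split i) => i0; case: (split j) => j0 /=;
  rewrite ?block_mxEul ?block_mxEur ?block_mxEdl ?block_mxEdr.
all: rewrite !mxE ?cellof_lshift ?locof_lshift ?cellof_rshift ?locof_rshift //=.
by rewrite !eqSS if_same.
Qed.

Lemma first_block_colS n L :
  first_block_col n.+1 L = col_mx L 0 :> 'M_(p.+1 + n * p.+1, p.+1).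
Proof.
apply/matrixP => i j; rewrite -[i]splitK.
by case: (split i) => i0 /=;
  rewrite ?col_mxEu ?col_mxEd !mxE ?cellof_lshift ?locof_lshift ?cellof_rshift.
Qed.

Lemma first_block_col0 n : first_block_col n 0 = 0.
Proof. by apply/matrixP => i j; rewrite !mxE if_same. Qed.

Lemma mul_block_diag_first_block_col n A L :
  bidiag_mx n A A 0 *m first_block_col n L = first_block_col n (A *m L).
Proof.
case: n => [|n]; first by rewrite [LHS]flatmx0 [RHS]flatmx0.
rewrite -[(n.+1 * p.+1)%N]/(p.+1 + n * p.+1)%N bidiag_mxS !first_block_colS.
by rewrite mul_block_col first_block_col0 !mul0mx !mulmx0 !addr0.
Qed.

Lemma mul_block_diag_bidiag_mx n A B0 B L :
  bidiag_mx n A A 0 *m bidiag_mx n B0 B L =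
  bidiag_mx n (A *m B0) (A *m B) (A *m L).
Proof.
elim: n B0 => [|n IHn] B0; first by rewrite [LHS]flatmx0 [RHS]flatmx0.
rewrite -[(n.+1 * p.+1)%N]/(p.+1 + n * p.+1)%N !bidiag_mxS mulmx_block.
rewrite first_block_col0 !mul0mx !mulmx0 !addr0 !add0r.
by rewrite IHn mul_block_diag_first_block_col.
Qed.

Lemma block_diag_mx1 n : bidiag_mx n 1%:M 1%:M 0 = 1%:M.
Proof.
elim: n => [|n IHn]; first by rewrite [LHS]flatmx0 [RHS]flatmx0.
by rewrite bidiag_mxS IHn first_block_col0 -scalar_mx_block.
Qed.

Lemma det_block_diag_mx n B L : \det (bidiag_mx n B B L) = \det B ^+ n.
Proof.
elim: n => [|n IHn]; first by rewrite det_mx00.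
rewrite -[(n.+1 * p.+1)%N]/(p.+1 + n * p.+1)%N bidiag_mxS.
by rewrite det_lblock IHn exprS.
Qed.

Lemma det_bidiag_mx n B0 B L :
  \det (bidiag_mx n.+1 B0 B L) = \det B0 * \det B ^+ n.
Proof.
rewrite -[(n.+1 * p.+1)%N]/(p.+1 + n * p.+1)%N bidiag_mxS.
by rewrite det_lblock det_block_diag_mx.
Qed.
End BlockBidiagonal.

Lemma char_poly_mx_bidiag_mx (R : comNzRingType) p n (B0 B L : 'M[R]_p.+1) :
  char_poly_mx (bidiag_mx n B0 B L) =
  bidiag_mx n (char_poly_mx B0) (char_poly_mx B) (- map_mx polyC L).
Proof.
elim: n B0 => [|n IHn] B0; first by rewrite [LHS]flatmx0 [RHS]flatmx0.
rewrite /char_poly_mx -[(n.+1 * p.+1)%N]/(p.+1 + n * p.+1)%N !bidiag_mxS.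
rewrite map_block_mx (scalar_mx_block p.+1 (n * p.+1)).
rewrite opp_block_mx add_block_mx map_mx0 oppr0 addr0 -IHn; congr block_mx.
by apply/matrixP => i j; rewrite !mxE; case: ifP; rewrite ?sub0r ?oppr0.
Qed.

Lemma char_poly_bidiag_mx (R : comNzRingType) p n (B0 B L : 'M[R]_p.+1) :
  char_poly (bidiag_mx n.+1 B0 B L) = char_poly B0 * char_poly B ^+ n.
Proof. by rewrite /char_poly char_poly_mx_bidiag_mx det_bidiag_mx. Qed.

Lemma invmx_block_diag_mx (R : comUnitRingType) p n (A : 'M[R]_p.+1) :
  A \in unitmx -> invmx (bidiag_mx n A A 0) = bidiag_mx n (invmx A) (invmx A) 0.
Proof.
move=> Aunit; have AVA : bidiag_mx n (invmx A) (invmx A) 0 *m bidiag_mx n A A 0 = 1%:M.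
  by rewrite mul_block_diag_bidiag_mx mulVmx // mulmx0 block_diag_mx1.
have [_ Munit] := mulmx1_unit AVA.
by rewrite -[LHS]mul1mx -AVA -mulmxA mulmxV ?mulmx1.
Qed.

Section TwoByTwo.
Variable R : comNzRingType.
Implicit Types A B : 'M[R]_2.

Lemma det_mx2 A : \det A = A 0 0 * A 1 1 - A 0 1 * A 1 0.
Proof.
rewrite (expand_det_row _ 0) !big_ord_recl big_ord0 /cofactor !det_mx11 !mxE /=.
have -> : lift 0 (0 : 'I_1) = 1 :> 'I_2 by exact/val_inj.
have -> : lift 1 (0 : 'I_1) = 0 :> 'I_2 by exact/val_inj.
by rewrite expr0 expr1 mul1r mulN1r mulrN addr0.
Qed.

Lemma char_poly_mx2 A : char_poly A = 'X^2 - \tr A *: 'X + (\det A)%:P.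
Proof.
apply/polyP => -[|[|[|k]]]; rewrite !(coefD, coefN, coefZ, coefC, coefX, coefXn) /=.
- by rewrite char_poly_det expr2 mulrNN !mul1r mulr0 subr0 add0r.
- by rewrite char_poly_trace // mulr1 sub0r addr0.
- have /monicP := char_poly_monic A; rewrite lead_coefE size_char_poly => ->.
  by rewrite mulr0 !subr0 addr0.
- by rewrite nth_default ?size_char_poly // mulr0 subr0 addr0.
Qed.

Lemma mxtrace_adj_mul2 A B : \tr (\adj A *m B) =
  A 1 1 * B 0 0 - A 0 1 * B 1 0 - A 1 0 * B 0 1 + A 0 0 * B 1 1.
Proof.
rewrite /mxtrace !big_ord_recl big_ord0 !mxE !big_ord_recl !big_ord0 !mxE.
rewrite /cofactor !det_mx11 !mxE /=.
have -> : lift 0 (0 : 'I_1) = 1 :> 'I_2 by exact/val_inj.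
have -> : lift 1 (0 : 'I_1) = 0 :> 'I_2 by exact/val_inj.
have -> : ord0 = 0 :> 'I_2 by [].
rewrite /bump /=; ring.
Qed.
End TwoByTwo.

Lemma mxtrace_invmx_mul (F : fieldType) n (M K : 'M[F]_n) : M \in unitmx ->
  \tr (invmx M *m K) = \tr (\adj M *m K) / \det M.
Proof. by move=> Munit; rewrite /invmx Munit -scalemxAl mxtraceZ mulrC. Qed.

Lemma pint01_widen (F : fieldType) n (q : {poly F}) : (size q <= n)%N ->
  pint01 q = \sum_(i < n) q`_i / i.+1%:R.
Proof.
move=> qn; rewrite /pint01 (big_ord_widen n (fun i => q`_i / i.+1%:R)) //.
rewrite big_mkcond; apply: eq_bigr => i _; case: ifP => // /negbT.
by rewrite -leqNgt => qi; rewrite nth_default // mul0r.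
Qed.

Lemma pint01_quadratic (F : fieldType) (c0 c1 c2 : F) :
  pint01 (c0%:P + c1%:P * 'X + c2%:P * 'X^2) = c0 + c1 / 2%:R + c2 / 3%:R.
Proof.
set q := _ + _ * 'X^2.
have qE k : q`_k = c0 * (k == 0)%:R + c1 * (k == 1)%:R + c2 * (k == 2)%:R.
  by rewrite !coefD !coefCM coefC coefX coefXn; case: (k == 0); rewrite ?mulr1 ?mulr0.
rewrite (@pint01_widen _ 3); last first.
  by apply/leq_sizeP => -[|[|[|j]]] // _; rewrite qE !mulr0 !addr0.
rewrite !big_ord_recl big_ord0 !qE /= /bump /=.
by rewrite !mulr1 !mulr0 !addr0 !add0r divr1 addrA.
Qed.

Lemma linear_polyE (F : fieldType) (q : {poly F}) : (size q <= 2)%N ->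
  q = (q`_0)%:P + (q`_1)%:P * 'X.
Proof.
move=> q2; apply/polyP => -[|[|k]]; rewrite coefD coefCM coefC coefX /=.
- by rewrite mulr0 addr0.
- by rewrite mulr1 add0r.
- by rewrite mulr0 addr0 nth_default // (leq_trans q2).
Qed.

Definition coef_mx (F : fieldType) p (phi : 'I_p.+1 -> {poly F}) : 'M[F]_p.+1 :=
  \matrix_(i, j) (phi i)`_j.

Lemma det_coef_mx_neq0 (F : fieldType) p (phi : 'I_p.+1 -> {poly F}) :
  is_basisP phi -> \det (coef_mx phi) != 0.
Proof.
case=> phi_size phi_free; apply/negP => /det0P [c c_neq0 c_coef0].
case/eqP: c_neq0; apply/rowP => i; rewrite mxE; apply: phi_free => {i}.
apply/polyP => k; rewrite coef_sum coef0.
have [kp|pk] := ltnP k p.+1.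
  transitivity ((c *m coef_mx phi) 0 (Ordinal kp)); last by rewrite c_coef0 mxE.
  by rewrite mxE; apply: eq_bigr => i _; rewrite coefZ mxE.
rewrite big1 // => i _.
by rewrite coefZ nth_default ?mulr0 // (leq_trans (phi_size i)).
Qed.

Lemma KSB0 (F : fieldType) p (phi : 'I_p.+1 -> {poly F}) : KSB phi 0 = 0.
Proof. by apply/matrixP => i j; rewrite !mxE subrr mulr0 oppr0. Qed.

Lemma globM_block_diag (F : fieldType) p (phi : 'I_p.+1 -> {poly F}) N :
  globM phi N = bidiag_mx N (massM phi) (massM phi) 0.
Proof. by apply/matrixP => g h; rewrite !mxE !if_same mxE. Qed.

Lemma globK_bidiag (F : fieldType) p (phi : 'I_p.+1 -> {poly F}) d N :
  globK phi d N =
  bidiag_mx N (stiffKs phi - KR phi + KSB phi d) (stiffKs phi - KR phi) (KL phi).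
Proof.
apply/matrixP => g h; rewrite !mxE; case: ifP => // _.
by case: ifP => _; rewrite ?mxE ?addr0.
Qed.

Section LinearBasis.
Variables (F : numFieldType) (phi : 'I_2 -> {poly F}).
Hypothesis phi_basis : is_basisP phi.
Local Notation a i := (phi i)`_0.
Local Notation b i := (phi i)`_1.
Local Notation D := (a 0 * b 1 - a 1 * b 0).

Lemma basis_coef_det_neq0 : D != 0.
Proof.
by have := det_coef_mx_neq0 phi_basis; rewrite det_mx2 !mxE [b 0 * a 1]mulrC.
Qed.

Lemma basis_linearE i : phi i = (a i)%:P + (b i)%:P * 'X.
Proof. exact/linear_polyE/phi_basis.1. Qed.

Lemma horner_basis i x : (phi i).[x] = a i + b i * x.
Proof. by rewrite {1}basis_linearE !hornerE. Qed.

Lemma massM_entry i j :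
  massM phi i j = a i * a j + (a i * b j + b i * a j) / 2%:R + b i * b j / 3%:R.
Proof.
rewrite mxE -pint01_quadratic {1}(basis_linearE i) {1}(basis_linearE j).
by congr pint01; rewrite !polyCD !polyCM; ring.
Qed.

Lemma stiffKs_entry i j : stiffKs phi i j = b i * a j + b i * b j / 2%:R.
Proof.
rewrite mxE; have -> : (phi i)^`() * phi j =
    (b i * a j)%:P + (b i * b j)%:P * 'X + 0%:P * 'X^2.
  rewrite {1}(basis_linearE i) {1}(basis_linearE j) derivD derivC deriv_mulC derivX.
  by rewrite !polyCM; ring.
by rewrite pint01_quadratic mul0r addr0.
Qed.

Lemma det_massM : \det (massM phi) = D ^+ 2 / 12%:R.
Proof. by rewrite det_mx2 !massM_entry; field. Qed.

Lemma det_local_stiffness d :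
  \det (stiffKs phi - KR phi + KSB phi d) = D ^+ 2 / 2%:R.
Proof. by rewrite det_mx2 !(stiffKs_entry, mxE) !horner_basis; field. Qed.

Lemma mxtrace_local d :
  \tr (\adj (massM phi) *m (stiffKs phi - KR phi + KSB phi d)) =
  (d / 2%:R - 3%:R^-1) * D ^+ 2.
Proof.
by rewrite mxtrace_adj_mul2 !massM_entry !(stiffKs_entry, mxE) !horner_basis; field.
Qed.

Lemma massM_unit : massM phi \in unitmx.
Proof.
rewrite unitmxE unitfE det_massM mulf_neq0 ?expf_neq0 ?basis_coef_det_neq0 //.
by rewrite invr_eq0 pnatr_eq0.
Qed.

Lemma char_poly_local d :
  char_poly (invmx (massM phi) *m (stiffKs phi - KR phi + KSB phi d)) =
  'X^2 + (4%:R - 6%:R * d) *: 'X + 6%:R%:P.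
Proof.
rewrite char_poly_mx2 mxtrace_invmx_mul ?massM_unit // det_mulmx det_inv.
rewrite mxtrace_local det_massM det_local_stiffness -scaleNr.
by congr (_ + _ *: _ + _%:P); field; rewrite basis_coef_det_neq0.
Qed.

Lemma char_poly_interior :
  char_poly (invmx (massM phi) *m (stiffKs phi - KR phi)) =
  'X^2 + 4%:R *: 'X + 6%:R%:P.
Proof.
by rewrite -[stiffKs phi - KR phi]addr0 -(KSB0 phi) char_poly_local mulr0 subr0.
Qed.
End LinearBasis.

Theorem mainTheorem2 (R : realFieldType) (phi : 'I_2 -> {poly R}) (N : nat) (d : R) :
  is_basisP phi -> (1 <= N)%N ->
  char_poly (invmx (globM phi N) *m globK phi d N) =
  ('X^2 + 4%:R *: 'X + 6%:R%:P) ^+ (N - 1) *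
  ('X^2 - (6%:R * d) *: 'X + 4%:R *: 'X + 6%:R%:P).
Proof.
move=> phi_basis; case: N => // n _.
rewrite globM_block_diag globK_bidiag invmx_block_diag_mx ?massM_unit //.
rewrite mul_block_diag_bidiag_mx char_poly_bidiag_mx subn1 /= mulrC.
rewrite char_poly_interior // char_poly_local //.
by congr (_ * (_ + _)); rewrite scalerBl addrA addrAC.
Qed.
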